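(* Let $T$ be a training dataset with $m$ features and $n$ records, where each feature takes at most $v$ possible values. Let $y_{\min}$ be the class label with the fewest records in $T$ and $n_{y_{\min}}$ the number of records with label $y_{\min}$. Then naive Bayes with Laplace smoothing is $\delta$-training stable on $T$ with $\delta=\left(\frac{n_{y_{\min}}+v}{n_{y_{\min}}}\right)^{m-1}\frac{n}{n-1}$.
   Context: Records are pairs $(\mathbf{x},y)$ with $\mathbf{x}=(x_1,\dots,x_m)\in X^m$ and $y\in Y$ finite; a training dataset is a finite multiset of records. For a dataset $S$ of size $N_S$, let $n^S_y$ be the number of records with label $y$ and $n^S_{x_i,y}$ the number with $i$-th feature $x_i$ and label $y$. Naive Bayes with Laplace smoothing trained on $S$ gives $p_{\mathcal{A}(S)}(y\mid\mathbf{x})=\hat p_S(y)\prod_{i=1}^m\hat p_S(x_i\mid y)$ with $\hat p_S(y)=n^S_y/N_S$ and smoothed conditionals $\hat p_S(x_i\mid y)=(n^S_{x_i,y}+1)/(n^S_y+v)$. $\mathcal{A}$ is $\delta$-training stable on $T$ (for a constant $\delta>1$) if for every $t=(\mathbf{x}^{(t)},y^{(t)})\in T$ with $p_{\mathcal{A}(T\setminus\{t\})}(y^{(t)}\mid\mathbf{x}^{(t)})>0$ and $p_{\mathcal{A}(T)}(y^{(t)}\mid\mathbf{x}^{(t)})>0$, setting $\gamma_t=\max\Big(\delta,\ \frac{p_{\mathcal{A}(T)}(y^{(t)}\mid\mathbf{x}^{(t)})}{p_{\mathcal{A}(T\setminus\{t\})}(y^{(t)}\mid\mathbf{x}^{(t)})},\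 \frac{p_{\mathcal{A}(T\setminus\{t\})}(y^{(t)}\mid\mathbf{x}^{(t)})}{p_{\mathcal{A}(T)}(y^{(t)}\mid\mathbf{x}^{(t)})}\Big)$, one has $\gamma_t^{-1}p_{\mathcal{A}(T\setminus\{t\})}(y\mid\mathbf{x})\le p_{\mathcal{A}(T)}(y\mid\mathbf{x})\le\gamma_t\,p_{\mathcal{A}(T\setminus\{t\})}(y\mid\mathbf{x})$ for all $\mathbf{x}\in X^m$, $y\in Y$. *)

From HB Require Import structures.
From mathcomp Require Import all_boot all_order all_algebra.
Set Implicit Arguments. Unset Strict Implicit. Unset Printing Implicit Defensive.
Import Order.TTheory GRing.Theory Num.Theory.
Local Open Scope ring_scope.

(* A dataset is a finite multiset of records, represented as a
   sequence (all quantities below are order-invariant counts). *)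

Definition n_lab (X Y : eqType) (m : nat) (S : seq (m.-tuple X * Y)) (y : Y) : nat :=
  count (fun r => r.2 == y) S.

Definition n_feat (X Y : eqType) (m : nat) (S : seq (m.-tuple X * Y))
    (i : 'I_m) (a : X) (y : Y) : nat :=
  count (fun r => (tnth r.1 i == a) && (r.2 == y)) S.

Definition nb_prob (R : realFieldType) (X Y : eqType) (m v : nat)
    (S : seq (m.-tuple X * Y)) (x : m.-tuple X) (y : Y) : R :=
  ((n_lab S y)%:R / (size S)%:R) *
  \prod_(i < m) (((n_feat S i (tnth x i) y).+1)%:R / ((n_lab S y + v)%N)%:R).

Definition training_stable (R : realFieldType) (X Y : finType) (m : nat)
    (A : seq (m.-tuple X * Y) -> m.-tuple X -> Y -> R) (delta : R)
    (T : seq (m.-tuple X * Y)) : Prop :=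
  1 < delta /\
  forall t : m.-tuple X * Y, t \in T ->
    0 < A (rem t T) t.1 t.2 -> 0 < A T t.1 t.2 ->
    let gamma := Num.max delta
                   (Num.max (A T t.1 t.2 / A (rem t T) t.1 t.2)
                            (A (rem t T) t.1 t.2 / A T t.1 t.2)) in
    forall (x : m.-tuple X) (y : Y),
      gamma^-1 * A (rem t T) x y <= A T x y /\ A T x y <= gamma * A (rem t T) x y.

From HB Require Import structures.
From mathcomp Require Import all_boot all_order all_algebra.
From mathcomp Require Import zify ring.
Import Order.TTheory GRing.Theory Num.Theory.
Local Open Scope ring_scope.

(* Removing a record t from T only changes the counts of the label t.2.  For
   any other label y, p_{T \ t}(x, y) = N/(N-1) p_T(x, y).  For y = t.2 the label
   count drops from n+1 to n: each smoothed factor grows by at most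
   q = (n+1+v)/(n+v) <= (n_ymin+v)/n_ymin, while the prior n/(N-1) times one
   factor q is at most (n+1)/(N-1); this gives p_{T \ t} <= delta p_T.
   Conversely, p_T(x, y)/p_{T \ t}(x, y) is largest at x = t.1: feature by
   feature, (c_i+1)/(c'_i+1) is 1 unless x_i = t_i, where it is the value at t,
   so p_T <= gamma p_{T \ t}. *)

Lemma ler_prod_cross (R : numDomainType) (I : finType) (a b c d : I -> R) :
  (forall i, 0 <= a i) -> (forall i, 0 <= d i) ->
  (forall i, a i * d i <= c i * b i) ->
  (\prod_i a i) * (\prod_i d i) <= (\prod_i c i) * (\prod_i b i).
Proof.
move=> a_ge0 d_ge0 le_ad; rewrite -!big_split /=.
by apply: ler_prod => i _; rewrite mulr_ge0 ?le_ad.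
Qed.

Lemma ler_prod_scale (R : numDomainType) (I : finType) (a b : I -> R) (q : R) :
  (forall i, 0 <= a i <= q * b i) -> \prod_i a i <= q ^+ #|I| * \prod_i b i.
Proof.
by move=> le_ab; rewrite -prodr_const -big_split; apply: ler_prod => i _.
Qed.

Section RemoveRecord.

Context {X Y : eqType} {m : nat} {T : seq (m.-tuple X * Y)} {t : m.-tuple X * Y}.
Hypothesis tT : t \in T.

Let count_T (P : pred (m.-tuple X * Y)) : count P T = (P t + count P (rem t T))%N.
Proof. by rewrite (permP (perm_to_rem tT)). Qed.

Lemma size_rem_succ : size T = (size (rem t T)).+1.
Proof. by rewrite size_rem // prednK // -has_predT; apply/hasP; exists t. Qed.

Lemma n_lab_rem_same : n_lab T t.2 = (n_lab (rem t T) t.2).+1.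
Proof. by rewrite /n_lab count_T eqxx. Qed.

Lemma n_lab_rem_other y : y != t.2 -> n_lab (rem t T) y = n_lab T y.
Proof. by move=> yt; rewrite /n_lab count_T /= [t.2 == y]eq_sym (negbTE yt). Qed.

Lemma n_feat_rem_other i a y : y != t.2 -> n_feat (rem t T) i a y = n_feat T i a y.
Proof. by move=> yt; rewrite /n_feat count_T /= [t.2 == y]eq_sym (negbTE yt) andbF. Qed.

Lemma n_feat_rem_same i a :
  n_feat T i a t.2 = ((tnth t.1 i == a) + n_feat (rem t T) i a t.2)%N.
Proof. by rewrite /n_feat count_T eqxx andbT. Qed.

Lemma n_feat_rem_cross i a :
  ((n_feat T i a t.2).+1 * (n_feat (rem t T) i (tnth t.1 i) t.2).+1
   <= (n_feat T i (tnth t.1 i) t.2).+1 * (n_feat (rem t T) i a t.2).+1)%N.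
Proof.
rewrite !n_feat_rem_same eqxx.
have [<-|_] := eqVneq (tnth t.1 i) a; first by rewrite mulnC.
by rewrite add0n; nia.
Qed.

End RemoveRecord.

Lemma smoothing_ratio_le (R : numFieldType) (n k v : nat) :
  (0 < k)%N -> (k <= n.+1)%N -> (0 < v)%N ->
  ((n.+1 + v)%N)%:R / ((n + v)%N)%:R <= ((k + v)%N)%:R / k%:R :> R.
Proof.
move=> k_gt0 le_kn v_gt0; rewrite ler_pdivrMr ?ltr0n ?addn_gt0 ?v_gt0 ?orbT //.
by rewrite mulrAC ler_pdivlMr ?ltr0n // -!natrM ler_nat; nia.
Qed.

Lemma mulr_smoothing_ratio_le (R : numFieldType) (n v : nat) :
  n%:R * (((n.+1 + v)%N)%:R / ((n + v)%N)%:R) <= n.+1%:R :> R.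
Proof.
have [->|n_gt0] := posnP n; first by rewrite mul0r ler0n.
rewrite mulrA ler_pdivrMr ?ltr0n ?addn_gt0 ?n_gt0 // -!natrM ler_nat; nia.
Qed.

Section NaiveBayesRemoveRecord.

Variables (R : realFieldType) (X Y : eqType) (m v : nat).
Variables (T : seq (m.-tuple X * Y)) (t : m.-tuple X * Y).
Hypothesis tT : t \in T.

Local Notation p := (@nb_prob R X Y m v).
Local Notation T' := (rem t T).

Lemma nb_prob_ge0 (S : seq (m.-tuple X * Y)) x y : 0 <= p S x y.
Proof. by apply: mulr_ge0; [|apply: prodr_ge0 => i _]; apply: divr_ge0. Qed.

Lemma nb_prob_rem_other x y : y != t.2 ->
  p T' x y = (size T)%:R / (size T')%:R * p T x y.
Proof.
move=> yt; rewrite /nb_prob n_lab_rem_other //.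
under eq_bigr => i _ do rewrite n_feat_rem_other //.
rewrite mulrA; congr (_ * _).
by rewrite [RHS]mulrC mulrA divfK // (size_rem_succ tT) pnatr_eq0.
Qed.

Lemma nb_prob_rem_cross x :
  p T x t.2 * p T' t.1 t.2 <= p T t.1 t.2 * p T' x t.2.
Proof.
rewrite /nb_prob mulrACA [leRHS]mulrACA.
apply: ler_wpM2l; first by apply: mulr_ge0; apply: divr_ge0.
apply: ler_prod_cross => [i|i|i]; [exact: divr_ge0 | exact: divr_ge0 |].
rewrite !mulf_div ler_wpM2r ?invr_ge0 ?mulr_ge0 //.
by rewrite -!natrM ler_nat n_feat_rem_cross.
Qed.

Lemma nb_prob_rem_same_le (k : nat) x :
  (0 < m)%N -> (0 < v)%N -> (0 < k)%N -> (k <= n_lab T t.2)%N ->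
  p T' x t.2
  <= (((k + v)%N)%:R / k%:R) ^+ m.-1 * ((size T)%:R / (size T')%:R) * p T x t.2.
Proof.
move=> m_gt0 v_gt0 k_gt0; rewrite /nb_prob (n_lab_rem_same tT) => le_kn.
set n := n_lab T' t.2; set q : R := ((n.+1 + v)%N)%:R / ((n + v)%N)%:R.
set B := \prod_(i < m) ((n_feat T i (tnth x i) t.2).+1%:R / _).
have le_prod : \prod_(i < m) ((n_feat T' i (tnth x i) t.2).+1%:R / ((n + v)%N)%:R)
               <= q ^+ m * B.
  rewrite -[in q ^+ m](card_ord m); apply: ler_prod_scale => i.
  rewrite divr_ge0 //= /q [leRHS]mulrC [leRHS]mulrA divfK ?pnatr_eq0 ?addSn //.
  by rewrite ler_wpM2r ?invr_ge0 // ler_nat ltnS (n_feat_rem_same tT) leq_addl.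
apply: le_trans (ler_wpM2l _ le_prod) _; first exact: divr_ge0.
rewrite (size_rem_succ tT); set N' := size T'; set A : R := ((k + v)%N)%:R / k%:R.
have [->|N'_gt0] := posnP N'; first by rewrite invr0 !(mulr0, mul0r).
have -> : A ^+ m.-1 * (N'.+1%:R / N'%:R) * (n.+1%:R / N'.+1%:R * B)
          = A ^+ m.-1 * n.+1%:R / N'%:R * B.
  by field; rewrite [1 + _]addrC natr1 !pnatr_eq0 -lt0n N'_gt0.
have -> : n%:R / N'%:R * (q ^+ m * B) = q ^+ m.-1 * (n%:R * q) / N'%:R * B.
  by rewrite -{1}(prednK m_gt0) exprSr; ring.
have q_ge0 : 0 <= q by exact: divr_ge0.
have B_ge0 : 0 <= B by apply: prodr_ge0 => i _; exact: divr_ge0.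
rewrite ler_wpM2r // ler_wpM2r ?invr_ge0 //.
apply: ler_pM; [exact: exprn_ge0 | exact: mulr_ge0 | | exact: mulr_smoothing_ratio_le].
by rewrite lerXn2r ?nnegrE ?divr_ge0 ?smoothing_ratio_le.
Qed.

Lemma nb_prob_rem_le (k : nat) x y :
  (0 < m)%N -> (0 < v)%N -> (0 < k)%N -> (k <= n_lab T t.2)%N ->
  p T' x y
  <= (((k + v)%N)%:R / k%:R) ^+ m.-1 * ((size T)%:R / (size T')%:R) * p T x y.
Proof.
move=> m_gt0 v_gt0 k_gt0 le_kn; have [->|yt] := eqVneq y t.2.
  exact: nb_prob_rem_same_le.
rewrite nb_prob_rem_other // ler_wpM2r ?nb_prob_ge0 // ler_peMl ?divr_ge0 //.
by rewrite exprn_ege1 // ler_pdivlMr ?ltr0n // mul1r ler_nat leq_addr.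
Qed.

Lemma nb_prob_gt0_size (S : seq (m.-tuple X * Y)) x y :
  0 < p S x y -> (0 < size S)%N.
Proof.
by rewrite lt0n; apply: contraTneq => S0; rewrite /nb_prob S0 invr0 mulr0 mul0r ltxx.
Qed.

Lemma nb_prob_le_rem x y : 0 < p T' t.1 t.2 ->
  p T x y <= Num.max 1 (p T t.1 t.2 / p T' t.1 t.2) * p T' x y.
Proof.
move=> pt_gt0; have [->|yt] := eqVneq y t.2.
  have le_ratio : p T t.1 t.2 / p T' t.1 t.2
                  <= Num.max 1 (p T t.1 t.2 / p T' t.1 t.2).
    by rewrite le_max lexx orbT.
  apply: le_trans (ler_wpM2r (nb_prob_ge0 _ _ _) le_ratio).
  by rewrite mulrAC ler_pdivlMr // nb_prob_rem_cross.
have le_one : 1 <= Num.max 1 (p T t.1 t.2 / p T' t.1 t.2) by rewrite le_max lexx.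
apply: le_trans (ler_wpM2r (nb_prob_ge0 _ _ _) le_one).
rewrite mul1r nb_prob_rem_other // ler_peMl ?nb_prob_ge0 //.
have N_gt0 : (0 < size T')%N by apply: nb_prob_gt0_size pt_gt0.
by rewrite ler_pdivlMr ?ltr0n // mul1r ler_nat (size_rem_succ tT).
Qed.

End NaiveBayesRemoveRecord.

Lemma training_stable_of_bounds (R : realFieldType) (X Y : finType) (m : nat)
    (A : seq (m.-tuple X * Y) -> m.-tuple X -> Y -> R) (delta : R)
    (T : seq (m.-tuple X * Y)) :
  1 < delta -> (forall S x y, 0 <= A S x y) ->
  (forall t, t \in T -> forall x y, A (rem t T) x y <= delta * A T x y) ->
  (forall t, t \in T -> 0 < A (rem t T) t.1 t.2 -> forall x y,
     A T x y <= Num.max 1 (A T t.1 t.2 / A (rem t T) t.1 t.2) * A (rem t T) x y) ->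
  training_stable A delta T.
Proof.
move=> delta_gt1 A_ge0 lower upper; split=> // t tT pt_gt0 _ gamma x y.
have le_delta : delta <= gamma by rewrite le_max lexx.
have gamma_gt0 : 0 < gamma by apply: lt_le_trans le_delta; apply: lt_trans delta_gt1.
split.
  rewrite ler_pdivrMl //; apply: le_trans (lower t tT x y) _.
  exact: ler_wpM2r.
apply: le_trans (upper t tT pt_gt0 x y) _; rewrite ler_wpM2r // ge_max.
by rewrite (le_trans _ le_delta) ?(ltW delta_gt1) //= !le_max lexx !orbT.
Qed.

Theorem mainTheorem4 (R : realFieldType) (X Y : finType) (m v : nat)
    (T : seq (m.-tuple X * Y)) (ymin : Y) :
  (0 < m)%N -> (1 < size T)%N -> (#|X| <= v)%N ->
  (0 < n_lab T ymin)%N ->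
  (forall y : Y, (0 < n_lab T y)%N -> (n_lab T ymin <= n_lab T y)%N) ->
  training_stable (nb_prob R v)
    ((((n_lab T ymin + v)%N)%:R / (n_lab T ymin)%:R) ^+ m.-1
       * ((size T)%:R / ((size T).-1)%:R)) T.
Proof.
move=> m_gt0 T_gt1 Xv nmin_gt0 nmin_le.
have v_gt0 : (0 < v)%N.
  have /hasP[r _ _] : has predT T by rewrite has_predT ltnW.
  by apply: leq_trans Xv; apply/card_gt0P; exists (tnth r.1 (Ordinal m_gt0)).
apply: training_stable_of_bounds => [||t tT x y|t tT pt_gt0 x y].
- have size_ratio_gt1 : 1 < (size T)%:R / ((size T).-1)%:R :> R.
    by rewrite ltr_pdivlMr ?ltr0n ?mul1r ?ltr_nat; lia.
  have smoothing_ratio_ge1 : 1 <= ((n_lab T ymin + v)%N)%:R / (n_lab T ymin)%:R :> R.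
    by rewrite ler_pdivlMr ?ltr0n // mul1r ler_nat leq_addr.
  apply: (lt_le_trans size_ratio_gt1); rewrite ler_peMl ?exprn_ege1 //.
  exact: le_trans ler01 (ltW size_ratio_gt1).
- exact: nb_prob_ge0.
- rewrite -(size_rem tT); apply: nb_prob_rem_le => //.
  by apply: nmin_le; rewrite (n_lab_rem_same tT).
- exact: nb_prob_le_rem.
Qed.
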